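(* Let $\overline{x}$ be any set of variables and let $\Sigma(\overline{x})$ be any set of $\mathcal{L}$-equations in the variables $\overline{x}$. Then $\Sigma$ is satisfiable if, and only if, every finite subset of $\Sigma$ is satisfiable.
   Context: An MV-algebra is an algebra $(A,\oplus,\neg,0)$ of type $(2,1,0)$ such that $(A,\oplus,0)$ is a commutative monoid, $\neg\neg a=a$, $a\oplus\neg 0=\neg 0$, and $\neg(\neg a\oplus b)\oplus b=\neg(\neg b\oplus a)\oplus a$ for all $a,b$. Derived operations: $1:=\neg 0$, $a\odot b:=\neg(\neg a\oplus\neg b)$, $a\ominus b:=a\odot\neg b$, $a\to b:=\neg a\oplus b$, $a\vee b:=\neg(\neg a\oplus b)\oplus b$, $a\wedge b:=\neg(\neg a\vee\neg b)$ (these are the join and meet of a lattice order $\le$), and $d(a,b):=(a\ominus b)\oplus(b\ominus a)$. Let $\mathcal{L}=\{\delta,\oplus,\neg,0\}$ be the language of type $(\omega,2,1,0)$ ($\delta$ takes a countably infinite sequence of arguments). For an element $x$ write $\tfrac12(x):=\delta(x,0,0,\dots)$. A $\delta$-algebra is an $\mathcal{L}$-algebra whose $\{\oplus,\neg,0\}$-reduct is an MV-algebra and which satisfies, for all $x,y$ and all sequences $\vec x=(x_1,x_2,\dots)$, $\vec y$: (i) $d(\delta(\vec x),\delta(x_1,0,0,\dots))=\delta(0,x_2,x_3,\dots)$; (ii) $\tfrac12(\delta(\vec x))=\delta(\tfrac12(x_1),\tfrac12(x_2),\dots)$; (iii) $\delta(x,x,\dots)=x$; (iv) $\delta(0,\vec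 x)=\tfrac12(\delta(\vec x))$; (v) $\delta(x_1,x_2,\dots)\le\delta(x_1\oplus y_1,x_2\oplus y_2,\dots)$; (vi) $\tfrac12(x\ominus y)=\tfrac12(x)\ominus\tfrac12(y)$. $\Delta$ denotes the class of $\delta$-algebras. The standard $\delta$-algebra is $[0,1]$ with $x\oplus y=\min\{1,x+y\}$, $\neg x=1-x$, $0$, and $\delta(\vec x)=\sum_{i\ge1}x_i/2^i$. For a set of variables $\overline{x}$, $T(\overline{x})$ is the algebra of $\mathcal{L}$-terms in $\overline{x}$ (absolutely free $\mathcal{L}$-algebra). An $\mathcal{L}$-equation in $\overline{x}$ is a pair $s\approx t$ of terms in $T(\overline{x})$. For an $\mathcal{L}$-algebra $A$ and an assignment $f\colon\overline{x}\to A$, let $\bar f\colon T(\overline{x})\to A$ be the unique homomorphism extending $f$; write $A,f\models\Sigma$ if $\bar f(s)=\bar f(t)$ for every $s\approx t$ in $\Sigma$. A set of equations $\Sigma(\overline{x})$ (a theory) is satisfiable if there exist a $\delta$-algebra $A$ with at least two elements and an assignment $f\colon\overline{x}\to A$ with $A,f\models\Sigma$. *)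

From Stdlib Require Import List.
Set Implicit Arguments.

Record DeltaAlgebra : Type := {
  carrier :> Type;
  oplus : carrier -> carrier -> carrier;
  neg : carrier -> carrier;
  zero : carrier;
  delta : (nat -> carrier) -> carrier;  (* x_1, x_2, ... is (x 0), (x 1), ... *)
  oplus_assoc : forall a b c, oplus a (oplus b c) = oplus (oplus a b) c;
  oplus_comm : forall a b, oplus a b = oplus b a;
  oplus_zero : forall a, oplus a zero = a;
  neg_neg : forall a, neg (neg a) = a;
  oplus_one : forall a, oplus a (neg zero) = neg zero;
  lukasiewicz : forall a b,
    oplus (neg (oplus (neg a) b)) b = oplus (neg (oplus (neg b) a)) a;
  (* delta axioms, stated with the derived operations unfolded below *)
  delta_i : forall x : nat -> carrier,
    let ominus a b := neg (oplus (neg a) (neg (neg b))) in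
    let d a b := oplus (ominus a b) (ominus b a) in
    d (delta x) (delta (fun n => match n with 0 => x 0 | _ => zero end))
    = delta (fun n => match n with 0 => zero | _ => x n end);
  delta_ii : forall x : nat -> carrier,
    let half a := delta (fun n => match n with 0 => a | _ => zero end) in
    half (delta x) = delta (fun n => half (x n));
  delta_iii : forall a, delta (fun _ => a) = a;
  delta_iv : forall x : nat -> carrier,
    let half a := delta (fun n => match n with 0 => a | _ => zero end) in
    delta (fun n => match n with 0 => zero | S m => x m end) = half (delta x);
  delta_v : forall x y : nat -> carrier,
    let join a b := oplus (neg (oplus (neg a) b)) b in
    join (delta x) (delta (fun n => oplus (x n) (y n)))
    = delta (fun n => oplus (x n) (y n));
  delta_vi : forall a b,
    let ominus a b := neg (oplus (neg a) (neg (neg b))) in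
    let half a := delta (fun n => match n with 0 => a | _ => zero end) in
    half (ominus a b) = ominus (half a) (half b)
}.

Section Derived.
Variable A : DeltaAlgebra.
Definition one : A := neg A (zero A).
Definition odot (a b : A) : A := neg A (oplus A (neg A a) (neg A b)).
Definition ominus (a b : A) : A := odot a (neg A b).
Definition mvjoin (a b : A) : A := oplus A (neg A (oplus A (neg A a) b)) b.
Definition mvle (a b : A) : Prop := mvjoin a b = b.
Definition dist (a b : A) : A := oplus A (ominus a b) (ominus b a).
Definition half (a : A) : A := delta A (fun n => match n with 0 => a | _ => zero A end).
End Derived.

Inductive term (V : Type) : Type :=
  | tvar : V -> term V
  | tdelta : (nat -> term V) -> term V
  | toplus : term V -> term V -> term V
  | tneg : term V -> term V
  | tzero : term V.

Arguments tzero {V}.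

Fixpoint eval (V : Type) (A : DeltaAlgebra) (f : V -> A) (t : term V) : A :=
  match t with
  | tvar v => f v
  | tdelta s => delta A (fun n => @eval V A f (s n))
  | toplus s u => oplus A (@eval V A f s) (@eval V A f u)
  | tneg s => neg A (@eval V A f s)
  | tzero => zero A
  end.

Definition equation (V : Type) := (term V * term V)%type.

Definition models (V : Type) (A : DeltaAlgebra) (f : V -> A)
  (Sigma : equation V -> Prop) : Prop :=
  forall e, Sigma e -> @eval V A f (fst e) = @eval V A f (snd e).

Definition satisfiable (V : Type) (Sigma : equation V -> Prop) : Prop :=
  exists (A : DeltaAlgebra),
    (exists a b : A, a <> b) /\ exists f : V -> A, @models V A f Sigma.
Arguments eval {V A} f t.

(* For the
   converse we show that every model can be moved to the standard algebra
   [0,1], and then glue the finite models by compactness of the cube [0,1]^V. *)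

From Pilot Require Import Defs.
From Stdlib Require Import List Lia Reals Lra Classical FunctionalExtensionality
  ProofIrrelevance.
From Coquelicot Require Coquelicot.
From mathcomp Require all_boot all_order all_algebra classical_sets boolp topology normedtype Rstruct
  Rstruct_topology.

(** * 1. MV-algebra calculus *)

Section MVAlgebra.
Context {A : DeltaAlgebra}.
Local Notation "x ⊕ y" := (oplus A x y) (at level 50, left associativity).
Local Notation "¬ x" := (Defs.neg A x) (at level 35, right associativity).
Local Notation "𝟎" := (zero A).
Local Notation "𝟏" := (one A).
Local Notation "a ⊙ b" := (odot A a b) (at level 40, left associativity).
Local Notation join := (mvjoin A).

Definition monus (a b : A) : A := ¬(¬a ⊕ b).
Definition mvmeet (a b : A) : A := a ⊙ (¬a ⊕ b).
Definition leq (a b : A) : Prop := ¬a ⊕ b = 𝟏.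

Lemma oplusA a b c : a ⊕ (b ⊕ c) = a ⊕ b ⊕ c. Proof. apply oplus_assoc. Qed.
Lemma oplusC a b : a ⊕ b = b ⊕ a. Proof. apply oplus_comm. Qed.
Lemma oplus0 a : a ⊕ 𝟎 = a. Proof. apply oplus_zero. Qed.
Lemma negK a : ¬¬a = a. Proof. apply neg_neg. Qed.
Lemma zero_oplus a : 𝟎 ⊕ a = a. Proof. rewrite oplusC; apply oplus0. Qed.
Lemma neg_one : ¬ 𝟏 = 𝟎. Proof. apply negK. Qed.
Lemma oplus1 a : a ⊕ 𝟏 = 𝟏. Proof. apply oplus_one. Qed.
Lemma one_oplus a : 𝟏 ⊕ a = 𝟏. Proof. rewrite oplusC; apply oplus1. Qed.
Lemma oplus_neg a : a ⊕ ¬a = 𝟏.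
Proof.
  pose proof (lukasiewicz A 𝟏 a) as H.
  rewrite neg_one, zero_oplus, (oplus1 (¬a)), oplus1 in H.
  rewrite oplusC. exact H.
Qed.
Lemma neg_oplus a : ¬a ⊕ a = 𝟏. Proof. rewrite oplusC; apply oplus_neg. Qed.
Lemma oplusAC a b c : a ⊕ b ⊕ c = a ⊕ c ⊕ b.
Proof. rewrite <- !oplusA, (oplusC b c). reflexivity. Qed.

Lemma mvjoinC a b : join a b = join b a. Proof. apply lukasiewicz. Qed.
Lemma monus_oplus_join a b : monus a b ⊕ b = join a b. Proof. reflexivity. Qed.

Lemma leq_refl a : leq a a. Proof. apply neg_oplus. Qed.
Lemma leq_join a b : leq a b -> join a b = b.
Proof.
  unfold leq, mvjoin. intro H. rewrite H, neg_one, zero_oplus. reflexivity.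
Qed.
Lemma join_leq a b : join a b = b -> leq a b.
Proof.
  intro H. unfold leq. rewrite <- H at 1. rewrite mvjoinC. unfold mvjoin.
  rewrite oplusA, oplusAC, neg_oplus, one_oplus. reflexivity.
Qed.
Lemma leq_monus_split a b : leq a b -> a ⊕ monus b a = b.
Proof.
  intro H. rewrite oplusC, monus_oplus_join, mvjoinC. apply leq_join; auto.
Qed.
Lemma leq_oplusr a b : leq a (a ⊕ b).
Proof. unfold leq. rewrite oplusA, neg_oplus, one_oplus. reflexivity. Qed.
Lemma leq_oplusl a b : leq b (a ⊕ b). Proof. rewrite oplusC; apply leq_oplusr. Qed.
Lemma leq_antisym a b : leq a b -> leq b a -> a = b.
Proof.
  intros H1 H2. apply leq_join in H1. apply leq_join in H2.
  rewrite <- H1, <- H2 at 1. apply mvjoinC.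
Qed.
Lemma leq_trans a b c : leq a b -> leq b c -> leq a c.
Proof.
  intros H1 H2. apply leq_monus_split in H1. apply leq_monus_split in H2.
  rewrite <- H2, <- H1, <- oplusA. apply leq_oplusr.
Qed.
Lemma oplus_monol a b c : leq a b -> leq (a ⊕ c) (b ⊕ c).
Proof.
  intro H. apply leq_monus_split in H. rewrite <- H, oplusAC. apply leq_oplusr.
Qed.
Lemma oplus_monor a b c : leq a b -> leq (c ⊕ a) (c ⊕ b).
Proof. intro H. rewrite (oplusC c a), (oplusC c b). apply oplus_monol; auto. Qed.
Lemma oplus_mono a b c d : leq a b -> leq c d -> leq (a ⊕ c) (b ⊕ d).
Proof.
  intros H1 H2. apply leq_trans with (b ⊕ c).
  - apply oplus_monol; auto.
  - apply oplus_monor; auto.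
Qed.
Lemma neg_antitone a b : leq a b -> leq (¬b) (¬a).
Proof. unfold leq; intro H. rewrite negK, oplusC. exact H. Qed.
Lemma neg_antitone_rev a b : leq (¬b) (¬a) -> leq a b.
Proof. intro H. apply neg_antitone in H. rewrite !negK in H. exact H. Qed.
Lemma leq1 a : leq a 𝟏. Proof. apply oplus1. Qed.
Lemma leq0 a : leq 𝟎 a. Proof. apply one_oplus. Qed.
Lemma leq0_eq a : leq a 𝟎 -> a = 𝟎.
Proof. intro H. apply leq_antisym; auto. apply leq0. Qed.
Lemma leq1_eq a : leq 𝟏 a -> a = 𝟏.
Proof. intro H. apply leq_antisym; auto. apply leq1. Qed.

Lemma join_ubr a b : leq b (join a b). Proof. apply leq_oplusl. Qed.
Lemma join_ubl a b : leq a (join a b). Proof. rewrite mvjoinC. apply join_ubr. Qed.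
Lemma monus_monol a b c : leq a b -> leq (monus a c) (monus b c).
Proof. intro H. apply neg_antitone, oplus_monol, neg_antitone; auto. Qed.
Lemma join_lub a b c : leq a c -> leq b c -> leq (join a b) c.
Proof.
  intros H1 H2. apply leq_trans with (monus c b ⊕ b).
  - apply oplus_monol, monus_monol; auto.
  - rewrite monus_oplus_join, mvjoinC, leq_join; auto. apply leq_refl.
Qed.

Lemma odotC a b : a ⊙ b = b ⊙ a. Proof. unfold odot. rewrite oplusC; auto. Qed.
Lemma odotA a b c : a ⊙ (b ⊙ c) = a ⊙ b ⊙ c.
Proof. unfold odot. rewrite !negK, oplusA. reflexivity. Qed.
Lemma odot_monol a b c : leq a b -> leq (a ⊙ c) (b ⊙ c).
Proof. intro H. apply neg_antitone, oplus_monol, neg_antitone; auto. Qed.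
Lemma odot_leql a b : leq (a ⊙ b) a.
Proof. apply neg_antitone_rev. unfold odot. rewrite negK. apply leq_oplusr. Qed.

Lemma meet_join a b : mvmeet a b = ¬ join (¬b) (¬a).
Proof.
  unfold mvmeet, mvjoin, odot. rewrite !negK, (oplusC (¬a) b). f_equal. apply oplusC.
Qed.
Lemma mvmeetC a b : mvmeet a b = mvmeet b a.
Proof. rewrite !meet_join, mvjoinC. reflexivity. Qed.
Lemma meet_lbr a b : leq (mvmeet a b) b.
Proof. rewrite meet_join. apply neg_antitone_rev. rewrite negK. apply join_ubl. Qed.
Lemma meet_idl a b : leq a b -> mvmeet a b = a.
Proof.
  intro H. rewrite meet_join, leq_join; [apply negK | apply neg_antitone; auto].
Qed.
Lemma meet_glb a b c : leq c a -> leq c b -> leq c (mvmeet a b).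
Proof.
  intros H1 H2. rewrite meet_join. apply neg_antitone_rev. rewrite negK.
  apply join_lub; apply neg_antitone; auto.
Qed.

Lemma residuation_l a b c : leq (a ⊙ b) c -> leq a (¬b ⊕ c).
Proof.
  intro H. apply leq_trans with (¬b ⊕ a ⊙ b); [|apply oplus_monor; auto].
  rewrite oplusC. apply leq_trans with (join a (¬b)).
  - apply join_ubl.
  - unfold mvjoin, odot. rewrite oplusC. apply leq_refl.
Qed.
Lemma residuation_r a b c : leq a (¬b ⊕ c) -> leq (a ⊙ b) c.
Proof.
  intro H. apply leq_trans with ((¬b ⊕ c) ⊙ b).
  - apply odot_monol; auto.
  - rewrite odotC. apply meet_lbr.
Qed.
Lemma monus_odot a b : monus a b = a ⊙ ¬b.
Proof. unfold monus, odot. rewrite negK. reflexivity. Qed.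
Lemma monus_residuation a b c : leq a (b ⊕ c) -> leq (monus a b) c.
Proof. rewrite monus_odot. intro H. apply residuation_r. rewrite negK. exact H. Qed.
Lemma monus_eq0 a b : leq a b -> monus a b = 𝟎.
Proof. unfold leq, monus. intro H. rewrite H. apply neg_one. Qed.
Lemma monus_leq a b : leq (monus a b) a.
Proof. apply monus_residuation, leq_oplusl. Qed.
Lemma monus_split a b : leq b a -> a = b ⊕ monus a b.
Proof. intro H. symmetry. apply leq_monus_split; auto. Qed.
Lemma monus_oplus_exact a b : leq a (¬b) -> monus (a ⊕ b) b = a.
Proof.
  intro H. transitivity (mvmeet a (¬b)); [|apply meet_idl; auto].
  rewrite meet_join, negK, mvjoinC. unfold mvjoin, monus. rewrite negK. reflexivity.
Qed.
Lemma monus_triangle a b c : leq (monus a c) (monus a b ⊕ monus b c).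
Proof.
  apply monus_residuation. apply leq_trans with (join a b); [apply join_ubl|].
  rewrite <- monus_oplus_join, oplusC.
  apply leq_trans with (join b c ⊕ monus a b); [apply oplus_monol, join_ubl|].
  rewrite <- monus_oplus_join, (oplusC (monus b c) c), <- oplusA,
    (oplusC (monus b c) (monus a b)). apply leq_refl.
Qed.
Lemma monus_oplus_subadd a b c d :
  leq (monus (a ⊕ b) (c ⊕ d)) (monus a c ⊕ monus b d).
Proof.
  apply monus_residuation. apply leq_trans with (join a c ⊕ join b d).
  - apply oplus_mono; apply join_ubl.
  - rewrite <- !monus_oplus_join, (oplusC (monus a c) c), (oplusC (monus b d) d),
      <- !oplusA, (oplusA (monus a c) d), (oplusC (monus a c) d), <- !oplusA.
    apply leq_refl.
Qed.
Lemma monus_neg a b : monus (¬a) (¬b) = monus b a.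
Proof. unfold monus. rewrite negK, oplusC. reflexivity. Qed.
Lemma monus_monus a b c : monus (monus a b) c = monus a (b ⊕ c).
Proof. unfold monus. rewrite negK, oplusA. reflexivity. Qed.

(* Two identities of Chang that yield prelinearity. *)
Lemma odot_absorb a b : a ⊙ b ⊙ (a ⊕ b) = a ⊙ b.
Proof.
  assert (Hb : b = (a ⊕ b) ⊙ (a ⊙ b ⊕ ¬a)).
  { assert (E : ¬(a ⊕ b) ⊕ b = a ⊙ b ⊕ ¬a).
    { pose proof (lukasiewicz A (¬a) b) as H. rewrite negK in H. rewrite H.
      unfold odot. rewrite (oplusC (¬b) (¬a)). reflexivity. }
    rewrite <- E. change ((a ⊕ b) ⊙ (¬(a ⊕ b) ⊕ b)) with (mvmeet (a ⊕ b) b).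
    rewrite mvmeetC, meet_idl; auto. apply leq_oplusl. }
  assert (Hm : a ⊙ (a ⊙ b ⊕ ¬a) = a ⊙ b).
  { rewrite oplusC. change (a ⊙ (¬a ⊕ a ⊙ b)) with (mvmeet a (a ⊙ b)).
    rewrite mvmeetC. apply meet_idl, odot_leql. }
  set (X := a ⊙ b ⊕ ¬a) in *.
  assert (E : a ⊙ b = a ⊙ ((a ⊕ b) ⊙ X)) by (rewrite <- Hb; reflexivity).
  rewrite E at 2.
  rewrite (odotA a (a ⊕ b) X), (odotC a (a ⊕ b)), <- (odotA (a ⊕ b) a X), Hm.
  apply odotC.
Qed.
Lemma oplus_absorb a b : a ⊕ b ⊕ a ⊙ b = a ⊕ b.
Proof.
  pose proof (odot_absorb (¬a) (¬b)) as H.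
  assert (H0 : ¬a ⊙ ¬b = ¬(a ⊕ b)) by (unfold odot; rewrite !negK; reflexivity).
  rewrite H0 in H. unfold odot at 1 in H. rewrite negK in H.
  rewrite <- (negK (a ⊕ b ⊕ a ⊙ b)). unfold odot. rewrite H. apply negK.
Qed.
(* Prelinearity: (x - y) ∧ (y - x) = 0; this is what makes maximal ideals prime. *)
Lemma prelinearity x y : mvmeet (monus x y) (monus y x) = 𝟎.
Proof.
  unfold mvmeet.
  assert (E : ¬ monus x y ⊕ monus y x = ¬ monus x y).
  { assert (E1 : ¬ monus x y = ¬x ⊕ y) by apply negK.
    assert (E2 : monus y x = ¬x ⊙ y)
      by (unfold monus, odot; rewrite negK, oplusC; reflexivity).
    rewrite E1, E2. apply oplus_absorb. }
  rewrite E. unfold odot. rewrite negK, neg_oplus. apply neg_one.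
Qed.
Lemma meet_eq0_monus p q : mvmeet p q = 𝟎 -> monus p q = p.
Proof.
  intro H. apply leq_antisym; [apply monus_leq|].
  assert (H0 : leq p (¬(¬p ⊕ q) ⊕ 𝟎)).
  { apply residuation_l. unfold mvmeet in H. rewrite H. apply leq_refl. }
  rewrite oplus0 in H0. exact H0.
Qed.
Lemma monus_eq_meet0 p q : monus p q = p -> mvmeet p q = 𝟎.
Proof.
  intro H. unfold mvmeet. assert (E : ¬p ⊕ q = ¬p).
  { rewrite <- H at 2. unfold monus. rewrite negK. reflexivity. }
  rewrite E. unfold odot. rewrite negK, neg_oplus. apply neg_one.
Qed.

Fixpoint nmul (k : nat) (x : A) : A :=
  match k with 0 => 𝟎 | S k => x ⊕ nmul k x end.

Lemma nmulD k j x : nmul (k + j) x = nmul k x ⊕ nmul j x.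
Proof.
  induction k; simpl.
  - rewrite zero_oplus; auto.
  - rewrite IHk, oplusA; auto.
Qed.
Lemma nmulM k j x : nmul (k * j) x = nmul k (nmul j x).
Proof. induction k; simpl; auto. rewrite nmulD, IHk; auto. Qed.
Lemma nmul1 x : nmul 1 x = x. Proof. apply oplus0. Qed.
Lemma nmul_mono k j x : k <= j -> leq (nmul k x) (nmul j x).
Proof.
  intro H. replace j with (k + (j - k)) by lia. rewrite nmulD. apply leq_oplusr.
Qed.
Lemma monus_nmul p q k : monus p q = p -> monus p (nmul k q) = p.
Proof.
  intro H. induction k; simpl.
  - unfold monus. rewrite oplus0, negK. reflexivity.
  - rewrite <- monus_monus, H. exact IHk.
Qed.
Lemma meet_nmul p q n k : mvmeet p q = 𝟎 -> mvmeet (nmul n p) (nmul k q) = 𝟎.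
Proof.
  intro H. apply meet_eq0_monus, (monus_nmul _ _ k), monus_eq_meet0 in H.
  rewrite mvmeetC in H.
  apply meet_eq0_monus, (monus_nmul _ _ n), monus_eq_meet0 in H.
  rewrite mvmeetC in H. exact H.
Qed.
End MVAlgebra.

(** * 2. Halving and dyadic elements in a delta-algebra *)

Section Halving.
Variable A : DeltaAlgebra.
Local Notation "x ⊕ y" := (oplus A x y) (at level 50, left associativity).
Local Notation "¬ x" := (Defs.neg A x) (at level 35, right associativity).
Local Notation "𝟎" := (zero A).
Local Notation "𝟏" := (one A).
Local Notation halve := (half A).

(* Axiom (v): delta is monotone along x <= x ⊕ y; used with sequences that are
   zero except in one entry to compare halves with delta. *)
Lemma delta_leq_split (x y : nat -> A) : leq (delta A x) (delta A (fun n => x n ⊕ y n)).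
Proof. apply join_leq, delta_v. Qed.

Lemma half_leq a : leq (halve a) a.
Proof.
  pose proof (delta_leq_split (fun n => match n with 0 => a | _ => 𝟎 end)
                              (fun n => match n with 0 => 𝟎 | _ => a end)) as H.
  cbv beta in H.
  assert (E : (fun n => (match n with 0 => a | _ => 𝟎 end) ⊕ (match n with 0 => 𝟎 | _ => a end))
              = (fun _ => a)).
  { apply functional_extensionality; intros [|n]; [apply oplus0 | apply zero_oplus]. }
  rewrite E, delta_iii in H. exact H.
Qed.

Lemma half_mono a b : leq a b -> leq (halve a) (halve b).
Proof.
  intro Hab.
  pose proof (delta_leq_split (fun n => match n with 0 => a | _ => 𝟎 end)
                              (fun n => match n with 0 => monus b a | _ => 𝟎 end)) as H.
  cbv beta in H.
  assert (E : (fun n => (match n with 0 => a | _ => 𝟎 end)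
                        ⊕ (match n with 0 => monus b a | _ => 𝟎 end))
              = (fun n => match n with 0 => b | _ => 𝟎 end)).
  { apply functional_extensionality; intros [|n]; [apply leq_monus_split; auto | apply oplus0]. }
  rewrite E in H. exact H.
Qed.

(* Axioms (i) and (iv) for a constant sequence: a - a/2 = a/2. *)
Lemma monus_half a : monus a (halve a) = halve a.
Proof.
  pose proof (delta_i A (fun _ => a)) as H. cbv beta zeta in H.
  pose proof (delta_iv A (fun _ => a)) as H2. cbv beta zeta in H2.
  rewrite delta_iii in H, H2.
  change (delta A (fun n => match n with 0 => 𝟎 | _ => a end)) with
         (delta A (fun n => match n with 0 => 𝟎 | S _ => a end)) in H.
  rewrite H2 in H. fold (halve a) in H. rewrite !negK in H.
  change (monus a (halve a) ⊕ monus (halve a) a = halve a) in H.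
  rewrite (monus_eq0 (halve a) a (half_leq a)), oplus0 in H. exact H.
Qed.

Lemma half_double a : halve a ⊕ halve a = a.
Proof. rewrite <- (monus_half a) at 2. symmetry. apply monus_split, half_leq. Qed.

Lemma neg_half_one : ¬ halve 𝟏 = halve 𝟏.
Proof.
  pose proof (monus_half 𝟏) as H.
  change (¬ (¬ 𝟏 ⊕ halve 𝟏) = halve 𝟏) in H. rewrite neg_one, zero_oplus in H. exact H.
Qed.

(* Axiom (vi) with a = 1: (¬b)/2 = ¬(1/2 ⊕ b/2). *)
Lemma half_neg b : halve (¬ b) = ¬ (halve 𝟏 ⊕ halve b).
Proof.
  pose proof (delta_vi A 𝟏 b) as H. cbv beta zeta in H.
  change (delta A (fun n => match n with 0 => b | _ => 𝟎 end)) with (halve b) in H.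
  change (delta A (fun n => match n with 0 => ¬ (¬ 𝟏 ⊕ ¬ ¬ b) | _ => 𝟎 end))
    with (halve (¬ (¬ 𝟏 ⊕ ¬ ¬ b))) in H.
  fold (halve 𝟏) in H. rewrite !negK, neg_half_one, neg_one, zero_oplus in H. exact H.
Qed.
Lemma neg_half a : ¬ halve a = halve 𝟏 ⊕ halve (¬a).
Proof. rewrite <- (negK a) at 1. rewrite (half_neg (¬a)), negK. reflexivity. Qed.

(* Halving is additive on disjoint sums: axiom (vi) with a := a ⊕ b. *)
Lemma half_oplus_exact a b : leq a (¬b) -> halve (a ⊕ b) = halve a ⊕ halve b.
Proof.
  intro Hab. pose proof (delta_vi A (a ⊕ b) b) as H. cbv beta zeta in H.
  change (delta A (fun n => match n with 0 => b | _ => 𝟎 end)) with (halve b) in H.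
  change (delta A (fun n => match n with 0 => a ⊕ b | _ => 𝟎 end)) with (halve (a ⊕ b)) in H.
  change (delta A (fun n => match n with 0 => ¬ (¬ (a ⊕ b) ⊕ ¬ ¬ b) | _ => 𝟎 end))
    with (halve (¬ (¬ (a ⊕ b) ⊕ ¬ ¬ b))) in H.
  rewrite !negK in H.
  change (halve (monus (a ⊕ b) b) = monus (halve (a ⊕ b)) (halve b)) in H.
  rewrite monus_oplus_exact in H; auto.
  rewrite (monus_split (halve (a ⊕ b)) (halve b)), <- H; [apply oplusC|].
  apply half_mono, leq_oplusl.
Qed.

Lemma half_zero : halve 𝟎 = 𝟎.
Proof.
  unfold half. transitivity (delta A (fun _ => 𝟎)); [|apply delta_iii].
  f_equal. apply functional_extensionality; intros [|n]; reflexivity.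
Qed.

(* The recursion delta(x) = x_0/2 ⊕ delta(x_1, x_2, ...)/2, from axioms (i), (iv), (v). *)
Lemma delta_unfold (x : nat -> A) :
  delta A x = halve (x 0) ⊕ halve (delta A (fun n => x (S n))).
Proof.
  pose proof (delta_i A x) as H. cbv beta zeta in H.
  pose proof (delta_iv A (fun n => x (S n))) as H2. cbv beta zeta in H2.
  assert (E : (fun n => match n with 0 => 𝟎 | _ => x n end)
              = (fun n => match n with 0 => 𝟎 | S m => x (S m) end)).
  { apply functional_extensionality; intros [|n]; reflexivity. }
  rewrite E, H2 in H. clear E H2.
  change (delta A (fun n => match n with 0 => x 0 | _ => 𝟎 end)) with (halve (x 0)) in H.
  fold (halve (delta A (fun n => x (S n)))) in H.
  assert (Hle : leq (halve (x 0)) (delta A x)).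
  { pose proof (delta_leq_split (fun n => match n with 0 => x 0 | _ => 𝟎 end)
                                (fun n => match n with 0 => 𝟎 | _ => x n end)) as H3.
    cbv beta in H3.
    assert (E : (fun n => (match n with 0 => x 0 | _ => 𝟎 end)
                          ⊕ (match n with 0 => 𝟎 | _ => x n end)) = x).
    { apply functional_extensionality; intros [|n]; [apply oplus0 | apply zero_oplus]. }
    rewrite E in H3. exact H3. }
  rewrite !negK in H.
  change (monus (delta A x) (halve (x 0)) ⊕ monus (halve (x 0)) (delta A x)
          = halve (delta A (fun n => x (S n)))) in H.
  rewrite (monus_eq0 _ _ Hle), oplus0 in H.
  rewrite (monus_split (delta A x) (halve (x 0))) at 1; auto. rewrite H. reflexivity.
Qed.

Definition dyadic_unit (n : nat) : A := Nat.iter n halve 𝟏.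
Definition dyadic (n k : nat) : A := nmul k (dyadic_unit n).

Lemma nmul_pow2_unit n m : nmul (2 ^ n) (dyadic_unit (n + m)) = dyadic_unit m.
Proof.
  induction n; [apply nmul1|].
  replace (2 ^ S n) with (2 ^ n * 2) by (simpl; lia).
  rewrite nmulM. replace (nmul 2 (dyadic_unit (S n + m))) with (dyadic_unit (n + m));
    [exact IHn|].
  simpl. rewrite oplus0. symmetry. apply half_double.
Qed.
Lemma dyadic_top n : dyadic n (2 ^ n) = 𝟏.
Proof. pose proof (nmul_pow2_unit n 0) as H. rewrite Nat.add_0_r in H. exact H. Qed.
Lemma dyadic_refine n m k : dyadic (n + m) (k * 2 ^ m) = dyadic n k.
Proof. unfold dyadic. rewrite nmulM, Nat.add_comm, nmul_pow2_unit. reflexivity. Qed.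

Lemma half_dyadic n k : ¬ dyadic_unit n = dyadic n (2 ^ n - 1) -> k <= 2 ^ n ->
  halve (dyadic n k) = dyadic (S n) k.
Proof.
  unfold dyadic. intros Hn. induction k; intro Hk; [apply half_zero|].
  simpl. rewrite oplusC, half_oplus_exact.
  - rewrite IHk by lia. apply oplusC.
  - rewrite Hn. apply nmul_mono. lia.
Qed.

Lemma neg_dyadic_unit n : ¬ dyadic_unit n = dyadic n (2 ^ n - 1).
Proof.
  induction n; [apply neg_one|].
  change (dyadic_unit (S n)) with (halve (dyadic_unit n)).
  rewrite neg_half, IHn, half_dyadic by (auto; lia).
  assert (E : halve 𝟏 = dyadic (S n) (2 ^ n)).
  { pose proof (nmul_pow2_unit n 1) as H. replace (n + 1) with (S n) in H by lia.
    unfold dyadic. rewrite H. reflexivity. }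
  unfold dyadic in *. rewrite E, <- nmulD. f_equal. simpl.
  pose proof (Nat.pow_nonzero 2 n). lia.
Qed.

Lemma neg_dyadic n k : k <= 2 ^ n -> ¬ dyadic n k = dyadic n (2 ^ n - k).
Proof.
  unfold dyadic. induction k; intro Hk.
  - simpl. rewrite Nat.sub_0_r. symmetry. apply dyadic_top.
  - simpl. rewrite <- (negK (nmul k (dyadic_unit n))) at 1.
    rewrite oplusC. change (monus (¬ nmul k (dyadic_unit n)) (dyadic_unit n)
                            = nmul (2 ^ n - S k) (dyadic_unit n)).
    rewrite IHk by lia.
    replace (2 ^ n - k) with (S (2 ^ n - S k)) by lia. simpl. rewrite oplusC.
    apply monus_oplus_exact. rewrite neg_dyadic_unit. apply nmul_mono. lia.
Qed.

Lemma dyadic_oplus n k j : dyadic n k ⊕ dyadic n j = dyadic n (Nat.min (2 ^ n) (k + j)).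
Proof.
  unfold dyadic. rewrite <- nmulD. destruct (Nat.le_gt_cases (k + j) (2 ^ n)).
  - rewrite Nat.min_r; auto.
  - rewrite Nat.min_l by lia. replace (k + j) with (2 ^ n + (k + j - 2 ^ n)) by lia.
    rewrite nmulD. fold (dyadic n (2 ^ n)). rewrite dyadic_top. apply one_oplus.
Qed.
Lemma dyadic_monus n k j : j <= k <= 2 ^ n -> monus (dyadic n k) (dyadic n j) = dyadic n (k - j).
Proof.
  intro H. change (¬ (¬ dyadic n k ⊕ dyadic n j) = dyadic n (k - j)).
  rewrite neg_dyadic by lia. unfold dyadic.
  rewrite <- nmulD. fold (dyadic n (2 ^ n - k + j)). rewrite neg_dyadic by lia.
  unfold dyadic. f_equal. lia.
Qed.
End Halving.

(** * 3. Prime ideals *)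

Section Ideals.
Context {A : DeltaAlgebra}.
Local Notation "x ⊕ y" := (oplus A x y) (at level 50, left associativity).
Local Notation "¬ x" := (Defs.neg A x) (at level 35, right associativity).
Local Notation "𝟎" := (zero A).
Local Notation "𝟏" := (one A).

Definition proper_ideal (I : A -> Prop) : Prop :=
  (forall a b, I a -> I b -> I (a ⊕ b)) /\ (forall a b, leq a b -> I b -> I a) /\ ~ I 𝟏.

(* A prime ideal: for any x y, one of x - y and y - x lies in it.  Modulo a
   prime ideal the order of A becomes total. *)
Record prime_ideal (M : A -> Prop) : Prop := {
  pi_zero : M 𝟎;
  pi_oplus : forall a b, M a -> M b -> M (a ⊕ b);
  pi_down : forall a b, leq a b -> M b -> M a;
  pi_proper : ~ M 𝟏;
  pi_prime : forall x y, M (monus x y) \/ M (monus y x)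
}.

(* A maximal proper ideal exists by Zorn's lemma, since the union of a chain of
   proper ideals is a proper ideal. *)
Lemma exists_maximal_ideal : exists M, proper_ideal M /\
  forall B, (forall t, M t -> B t) -> (exists t, B t /\ ~ M t) -> ~ proper_ideal B.
Proof.
  destruct (@classical_sets.Zorn_bigcup A proper_ideal) as [M [HM Mmax]].
  - intros F HF Htot.
    unfold classical_sets.bigcup; split; [|split]; cbn.
    + intros a b [X FX Xa] [Y FY Yb].
      destruct (Htot X Y FX FY) as [HXY|HYX].
      * exists Y; auto. apply (proj1 (HF Y FY)); auto.
      * exists X; auto. apply (proj1 (HF X FX)); auto.
    + intros a b Hab [X FX Xb]. exists X; auto.
      apply (proj1 (proj2 (HF X FX))) with b; auto.
    + intros [X FX Xe]. exact (proj2 (proj2 (HF X FX)) Xe).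
  - exists M. split; auto. intros B MB [t [Bt Mt]].
    apply Mmax. split; [exact MB|]. intro BM. exact (Mt (BM t Bt)).
Qed.

Section MaximalIdeal.
Variable M : A -> Prop.
Hypothesis M_ideal : proper_ideal M.
Hypothesis M_maximal : forall B, (forall t, M t -> B t) -> (exists t, B t /\ ~ M t) ->
  ~ proper_ideal B.

(* The ideal generated by M and a is all of A when a is not in M:
   some m in M (or m = 0) satisfies m ⊕ n.a = 1. *)
Lemma maximal_ideal_absorbs a : ~ M a -> exists m n, (M m \/ m = 𝟎) /\ m ⊕ nmul n a = 𝟏.
Proof.
  destruct M_ideal as [Mop [Mdown Mone]]. intro Ha.
  set (J := fun x => exists m n, (M m \/ m = 𝟎) /\ leq x (m ⊕ nmul n a)).
  assert (HJ : ~ proper_ideal J).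
  { apply M_maximal.
    - intros t Mt. exists t, 0. split; auto. simpl. rewrite oplus0. apply leq_refl.
    - exists a. split; auto. exists 𝟎, 1. split; auto. simpl.
      rewrite oplus0, zero_oplus. apply leq_refl. }
  apply NNPP. intro Hn. apply HJ. split; [|split].
  - intros x y [m [n [Hm Hx]]] [m' [n' [Hm' Hy]]].
    exists (m ⊕ m'), (n + n'). split.
    + destruct Hm as [Hm|Hm], Hm' as [Hm'|Hm']; subst.
      * left; apply Mop; auto.
      * left; rewrite oplus0; auto.
      * left; rewrite zero_oplus; auto.
      * right; apply zero_oplus.
    + rewrite nmulD. apply leq_trans with ((m ⊕ nmul n a) ⊕ (m' ⊕ nmul n' a)).
      * apply oplus_mono; auto.
      * rewrite <- !oplusA, (oplusA (nmul n a)), (oplusC (nmul n a) m'), <- (oplusA m').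
        apply leq_refl.
  - intros x y Hxy [m [n [Hm Hy]]]. exists m, n. split; auto. apply leq_trans with y; auto.
  - intros [m [n [Hm He]]]. apply Hn. exists m, n. split; auto.
    apply leq1_eq; auto.
Qed.

Lemma maximal_ideal_zero : 𝟏 <> 𝟎 -> M 𝟎.
Proof.
  intro Hnt. apply NNPP; intro Hz.
  destruct (maximal_ideal_absorbs 𝟎 Hz) as [m [n [Hm He]]].
  assert (E : forall k, nmul k 𝟎 = 𝟎) by (induction k; simpl; auto; rewrite IHk; apply oplus0).
  rewrite E, oplus0 in He. destruct Hm as [Hm|Hm]; subst.
  - exact (proj2 (proj2 M_ideal) Hm).
  - exact (Hnt (eq_sym He)).
Qed.

(* Primeness: if neither x - y nor y - x were in M, both would absorb elements
   of M into 1, contradicting prelinearity (x - y) ∧ (y - x) = 0. *)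
Lemma maximal_ideal_prime : 𝟏 <> 𝟎 -> forall x y, M (monus x y) \/ M (monus y x).
Proof.
  intros Hnt x y. destruct M_ideal as [Mop [Mdown Mone]].
  assert (Absorb : forall a, ~ M a -> exists m n, M m /\ m ⊕ nmul n a = 𝟏).
  { intros a Ha. destruct (maximal_ideal_absorbs a Ha) as [m [n [[Hm|Hm] He]]];
      exists m, n; subst; auto using maximal_ideal_zero. }
  apply NNPP. intro Hn. apply not_or_and in Hn. destruct Hn as [H1 H2].
  destruct (Absorb _ H1) as [m1 [n1 [Hm1 He1]]].
  destruct (Absorb _ H2) as [m2 [n2 [Hm2 He2]]].
  set (m := m1 ⊕ m2).
  assert (L1 : leq (¬ m) (nmul n1 (monus x y))).
  { unfold leq. rewrite negK. apply leq1_eq. rewrite <- He1. unfold m.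
    rewrite <- oplusA, (oplusC m2), oplusA. apply leq_oplusr. }
  assert (L2 : leq (¬ m) (nmul n2 (monus y x))).
  { unfold leq. rewrite negK. apply leq1_eq. rewrite <- He2. unfold m.
    rewrite <- oplusA. apply leq_oplusl. }
  assert (L3 : ¬ m = 𝟎).
  { apply leq0_eq. rewrite <- (meet_nmul _ _ n1 n2 (prelinearity x y)).
    apply meet_glb; auto. }
  apply Mone. replace 𝟏 with m; [unfold m; auto|].
  rewrite <- (negK m), L3. reflexivity.
Qed.
End MaximalIdeal.

Lemma nontrivial_one_zero : (exists a b : A, a <> b) -> 𝟏 <> 𝟎.
Proof.
  intros [a [b Hab]] He. apply Hab.
  assert (H : forall c, c = 𝟎) by (intro c; apply leq0_eq; rewrite <- He; apply leq1).
  rewrite (H a), (H b). reflexivity.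
Qed.

Lemma exists_prime_ideal : (exists a b : A, a <> b) -> exists M, prime_ideal M.
Proof.
  intro Hnt. apply nontrivial_one_zero in Hnt.
  destruct exists_maximal_ideal as [M [HM Mmax]].
  pose proof HM as [Mop [Mdown Mone]].
  exists M. constructor; auto.
  - exact (maximal_ideal_zero M HM Mmax Hnt).
  - exact (maximal_ideal_prime M HM Mmax Hnt).
Qed.
End Ideals.

(** * 4. The valuation A -> [0,1] attached to a prime ideal *)

Local Open Scope R_scope.

Lemma pow2_pos n : 0 < 2 ^ n.
Proof. apply pow_lt; lra. Qed.

Lemma inv_pow2_pos n : 0 < / 2 ^ n.
Proof. apply Rinv_0_lt_compat, pow2_pos. Qed.

Lemma inv_pow2_small e : 0 < e -> exists n, / 2 ^ n < e.
Proof.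
  intro He. destruct (pow_lt_1_zero (/2)) with (y := e) as [N HN]; auto.
  { rewrite Rabs_pos_eq; lra. }
  exists N. specialize (HN N (le_n _)).
  rewrite pow_inv, Rabs_pos_eq in HN; auto. left; apply inv_pow2_pos.
Qed.

Lemma le_approx x y c : 0 <= c -> (forall n, x <= y + c / 2 ^ n) -> x <= y.
Proof.
  intros Hc H. destruct (Rle_dec x y) as [|Hxy]; auto. exfalso.
  assert (Hd : 0 < (x - y) / (c + 1)) by (apply Rdiv_lt_0_compat; lra).
  destruct (inv_pow2_small _ Hd) as [m Hm]. specialize (H m).
  pose proof (inv_pow2_pos m).
  assert (c / 2 ^ m <= (c + 1) * / 2 ^ m - / 2 ^ m) by (unfold Rdiv; nra).
  assert ((c + 1) * / 2 ^ m < x - y).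
  { apply Rmult_lt_reg_r with (/ (c + 1)); [apply Rinv_0_lt_compat; lra|].
    replace ((c + 1) * / 2 ^ m * / (c + 1)) with (/ 2 ^ m)
      by (field; split; [lra | apply pow_nonzero; lra]).
    exact Hm. }
  lra.
Qed.

Lemma INR_pow2 n : INR (2 ^ n) = 2 ^ n.
Proof. rewrite pow_INR. reflexivity. Qed.

Definition dyadic_real (n k : nat) : R := INR k / 2 ^ n.

Lemma dyadic_real_le n k m j :
  (k * 2 ^ m <= j * 2 ^ n)%nat -> dyadic_real n k <= dyadic_real m j.
Proof.
  intro H. apply le_INR in H. rewrite !mult_INR, !INR_pow2 in H.
  unfold dyadic_real. pose proof (pow2_pos n). pose proof (pow2_pos m).
  apply Rmult_le_reg_r with (2 ^ n * 2 ^ m); [nra|].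
  replace (INR k / 2 ^ n * (2 ^ n * 2 ^ m)) with (INR k * 2 ^ m) by (field; lra).
  replace (INR j / 2 ^ m * (2 ^ n * 2 ^ m)) with (INR j * 2 ^ n) by (field; lra).
  exact H.
Qed.
Lemma dyadic_real_top n : dyadic_real n (2 ^ n) = 1.
Proof. unfold dyadic_real. rewrite INR_pow2. field. apply pow_nonzero; lra. Qed.
Lemma dyadic_real_0 n : dyadic_real n 0 = 0.
Proof. unfold dyadic_real. simpl. unfold Rdiv. ring. Qed.
Lemma dyadic_real_S n k : dyadic_real n (S k) = dyadic_real n k + / 2 ^ n.
Proof. unfold dyadic_real. rewrite S_INR. unfold Rdiv. ring. Qed.
Lemma dyadic_real_add n k j : dyadic_real n (k + j) = dyadic_real n k + dyadic_real n j.
Proof. unfold dyadic_real. rewrite plus_INR. unfold Rdiv. ring. Qed.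
Lemma dyadic_real_sub n k :
  (k <= 2 ^ n)%nat -> dyadic_real n (2 ^ n - k) = 1 - dyadic_real n k.
Proof.
  intro H. unfold dyadic_real. rewrite minus_INR, INR_pow2 by auto.
  field. apply pow_nonzero; lra.
Qed.
Lemma dyadic_real_bound n k : (k <= 2 ^ n)%nat -> 0 <= dyadic_real n k <= 1.
Proof.
  intro H. rewrite <- (dyadic_real_top n). unfold dyadic_real.
  pose proof (inv_pow2_pos n). apply le_INR in H. pose proof (pos_INR k).
  unfold Rdiv. split; [apply Rmult_le_pos|apply Rmult_le_compat_r]; lra.
Qed.

Section Valuation.
Variable A : DeltaAlgebra.
Variable M : A -> Prop.
Hypothesis HM : prime_ideal M.
Local Notation "x ⊕ y" := (oplus A x y) (at level 50, left associativity).
Local Notation "¬ x" := (Defs.neg A x) (at level 35, right associativity).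
Local Notation "𝟎" := (zero A).
Local Notation "𝟏" := (one A).
Local Notation halve := (half A).
Local Notation dyadic := (dyadic A).

(* The preorder "a <= b modulo M"; it is total because M is prime. *)
Definition leqM (a b : A) : Prop := M (monus a b).

Lemma nmul_ideal k x : M x -> M (nmul k x).
Proof.
  intro H. induction k; simpl; [apply (pi_zero _ HM)|apply (pi_oplus _ HM); auto].
Qed.
Lemma leq_leqM a b : leq a b -> leqM a b.
Proof. intro H. unfold leqM. rewrite monus_eq0; auto. apply (pi_zero _ HM). Qed.
Lemma leqM_refl a : leqM a a.
Proof. apply leq_leqM, leq_refl. Qed.
Lemma leqM_trans a b c : leqM a b -> leqM b c -> leqM a c.
Proof.
  unfold leqM; intros H1 H2. apply (pi_down _ HM) with (monus a b ⊕ monus b c).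
  - apply monus_triangle.
  - apply (pi_oplus _ HM); auto.
Qed.
Lemma leqM_total a b : leqM a b \/ leqM b a. Proof. apply (pi_prime _ HM). Qed.
Lemma leqM_oplus a b c d : leqM a c -> leqM b d -> leqM (a ⊕ b) (c ⊕ d).
Proof.
  unfold leqM; intros H1 H2. apply (pi_down _ HM) with (monus a c ⊕ monus b d).
  - apply monus_oplus_subadd.
  - apply (pi_oplus _ HM); auto.
Qed.
Lemma leqM_neg a b : leqM a b -> leqM (¬ b) (¬ a).
Proof. unfold leqM. rewrite monus_neg. auto. Qed.

Lemma dyadic_strict n k j : (j < k <= 2 ^ n)%nat -> ~ leqM (dyadic n k) (dyadic n j).
Proof.
  intros H Hp. unfold leqM in Hp. rewrite dyadic_monus in Hp by lia.
  apply (pi_proper _ HM). rewrite <- (dyadic_top A n). apply nmul_ideal.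
  apply (pi_down _ HM) with (nmul (k - j) (dyadic_unit A n)); auto.
  rewrite <- (nmul1 (dyadic_unit A n)) at 1. apply nmul_mono. lia.
Qed.
Lemma dyadic_leqM_nat n k m j : leqM (dyadic n k) (dyadic m j) ->
  (k <= 2 ^ n)%nat -> (j <= 2 ^ m)%nat -> (k * 2 ^ m <= j * 2 ^ n)%nat.
Proof.
  intros H Hk Hj.
  rewrite <- (dyadic_refine A n m k), <- (dyadic_refine A m n j), (Nat.add_comm m n) in H.
  destruct (Nat.le_gt_cases (k * 2 ^ m) (j * 2 ^ n)) as [|Hlt]; auto. exfalso.
  apply (dyadic_strict (n + m) (k * 2 ^ m) (j * 2 ^ n)); auto.
  split; auto. rewrite Nat.pow_add_r. apply Nat.mul_le_mono_r. auto.
Qed.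

Definition dyadics_below (a : A) (r : R) : Prop :=
  exists n k, (k <= 2 ^ n)%nat /\ leqM (dyadic n k) a /\ r = dyadic_real n k.

Lemma dyadics_below_bound a : bound (dyadics_below a).
Proof. exists 1. intros r [n [k [Hk [_ ->]]]]. apply dyadic_real_bound; auto. Qed.
Lemma dyadics_below_inhabited a : exists r, dyadics_below a r.
Proof.
  exists 0, 0%nat, 0%nat. split; [simpl; lia|split].
  - apply leq_leqM, leq0.
  - rewrite dyadic_real_0; auto.
Qed.

Definition value (a : A) : R :=
  proj1_sig (completeness _ (dyadics_below_bound a) (dyadics_below_inhabited a)).

Lemma value_lub a : is_lub (dyadics_below a) (value a).
Proof. unfold value. destruct (completeness _ _ _); auto. Qed.
Lemma value_ge_dyadic a n k :
  (k <= 2 ^ n)%nat -> leqM (dyadic n k) a -> dyadic_real n k <= value a.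
Proof. intros Hk Hp. apply (proj1 (value_lub a)). exists n, k. auto. Qed.
Lemma value_le_dyadic a n k :
  (k <= 2 ^ n)%nat -> leqM a (dyadic n k) -> value a <= dyadic_real n k.
Proof.
  intros Hk Hp. apply (proj2 (value_lub a)). intros r [n' [k' [Hk' [Hp' ->]]]].
  apply dyadic_real_le, dyadic_leqM_nat; auto. apply leqM_trans with a; auto.
Qed.
Lemma value_bounds a : 0 <= value a <= 1.
Proof.
  split.
  - rewrite <- (dyadic_real_0 0). apply value_ge_dyadic; [simpl; lia|].
    apply leq_leqM, leq0.
  - rewrite <- (dyadic_real_top 0). apply value_le_dyadic; [lia|].
    rewrite dyadic_top. apply leq_leqM, leq1.
Qed.

Lemma dyadic_bracket a n : exists k, (k <= 2 ^ n)%nat /\ leqM (dyadic n k) a /\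
  ((k = 2 ^ n)%nat \/ leqM a (dyadic n (S k))).
Proof.
  assert (G : forall K, (K <= 2 ^ n)%nat -> exists k, (k <= K)%nat /\
            leqM (dyadic n k) a /\ (k = K \/ ~ leqM (dyadic n (S k)) a)).
  { induction K; intro HK.
    - exists 0%nat. repeat split; auto. apply leq_leqM, leq0.
    - destruct IHK as [k [Hk [Hp [->|Hn]]]]; [lia| |].
      + destruct (classic (leqM (dyadic n (S K)) a)); [exists (S K)|exists K]; auto.
      + exists k. repeat split; auto. }
  destruct (G (2 ^ n)%nat (le_n _)) as [k [Hk [Hp [|Hn]]]]; exists k; repeat split; auto.
  right. destruct (leqM_total a (dyadic n (S k))); auto. contradiction.
Qed.

Lemma dyadic_approx a n : exists k, (k <= 2 ^ n)%nat /\ leqM (dyadic n k) a /\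
  dyadic_real n k <= value a <= dyadic_real n k + / 2 ^ n.
Proof.
  destruct (dyadic_bracket a n) as [k [Hk [Hp Hor]]]. exists k.
  repeat split; auto; [apply value_ge_dyadic; auto|].
  destruct Hor as [->|Hp2].
  - rewrite dyadic_real_top. pose proof (value_bounds a). pose proof (inv_pow2_pos n). lra.
  - rewrite <- dyadic_real_S. destruct (Nat.eq_dec k (2 ^ n)) as [->|Hne].
    + rewrite dyadic_real_S, dyadic_real_top.
      pose proof (value_bounds a). pose proof (inv_pow2_pos n). lra.
    + apply value_le_dyadic; auto. lia.
Qed.

Lemma value_unique a y :
  (forall n k, (k <= 2 ^ n)%nat -> leqM (dyadic n k) a -> dyadic_real n k <= y) ->
  (forall n k, (k <= 2 ^ n)%nat -> leqM a (dyadic n k) -> y <= dyadic_real n k) ->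
  y = value a.
Proof.
  intros Below Above.
  assert (G : forall n, - / 2 ^ n <= y - value a <= / 2 ^ n).
  { intro n. destruct (dyadic_bracket a n) as [k [Hk [Hp Hor]]].
    pose proof (Below n k Hk Hp). pose proof (value_ge_dyadic a n k Hk Hp).
    pose proof (inv_pow2_pos n). pose proof (value_bounds a).
    destruct Hor as [->|Hp2].
    - assert (y <= 1).
      { rewrite <- (dyadic_real_top n). apply Above; auto.
        rewrite dyadic_top. apply leq_leqM, leq1. }
      rewrite dyadic_real_top in *. split; lra.
    - destruct (Nat.eq_dec k (2 ^ n)) as [->|Hne].
      + assert (y <= 1).
        { rewrite <- (dyadic_real_top n). apply Above; auto.
          rewrite dyadic_top. apply leq_leqM, leq1. }
        rewrite dyadic_real_top in *. split; lra.
      + pose proof (Above n (S k) ltac:(lia) Hp2).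
        pose proof (value_le_dyadic a n (S k) ltac:(lia) Hp2).
        rewrite dyadic_real_S in *. split; lra. }
  apply Rle_antisym; apply le_approx with 1; try lra; intro n; specialize (G n);
    unfold Rdiv; lra.
Qed.

Lemma value_neg a : value (¬ a) = 1 - value a.
Proof.
  symmetry. apply value_unique; intros n k Hk Hp;
    apply leqM_neg in Hp; rewrite negK, neg_dyadic in Hp by auto.
  - apply value_le_dyadic in Hp; [|lia]. rewrite dyadic_real_sub in Hp; auto. lra.
  - apply value_ge_dyadic in Hp; [|lia]. rewrite dyadic_real_sub in Hp; auto. lra.
Qed.

Lemma value_mono a b : leq a b -> value a <= value b.
Proof.
  intro Hab. apply le_approx with 1; [lra|]. intro n.
  destruct (dyadic_approx a n) as [k [Hk [Hp [Hl Hu]]]].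
  assert (dyadic_real n k <= value b).
  { apply value_ge_dyadic; auto. apply leqM_trans with a; auto. apply leq_leqM; auto. }
  unfold Rdiv. lra.
Qed.

Lemma dyadic_below_oplus a b n k : (k <= 2 ^ n)%nat -> leqM (dyadic n k) (a ⊕ b) ->
  dyadic_real n k <= Rmin 1 (value a + value b).
Proof.
  intros Hk Hp. apply Rmin_glb; [apply dyadic_real_bound; auto|].
  apply le_approx with 2; [lra|]. intro m.
  destruct (dyadic_bracket a m) as [i [Hi [Hpi Hori]]].
  destruct (dyadic_bracket b m) as [j [Hj [Hpj Horj]]].
  pose proof (value_bounds a). pose proof (value_bounds b).
  pose proof (dyadic_real_bound n k Hk).
  pose proof (inv_pow2_pos m). unfold Rdiv.
  destruct Hori as [->|Hpi2].
  { pose proof (value_ge_dyadic a m (2 ^ m) (le_n _) Hpi). rewrite dyadic_real_top in *. lra. }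
  destruct Horj as [->|Hpj2].
  { pose proof (value_ge_dyadic b m (2 ^ m) (le_n _) Hpj). rewrite dyadic_real_top in *. lra. }
  pose proof (value_ge_dyadic a m i Hi Hpi). pose proof (value_ge_dyadic b m j Hj Hpj).
  assert (Hp3 : leqM (dyadic n k) (dyadic m (Nat.min (2 ^ m) (S i + S j)))).
  { apply leqM_trans with (a ⊕ b); auto. rewrite <- dyadic_oplus. apply leqM_oplus; auto. }
  apply dyadic_leqM_nat, dyadic_real_le in Hp3; auto; [|apply Nat.le_min_l].
  assert (Hmn : dyadic_real m (Nat.min (2 ^ m) (S i + S j)) <= dyadic_real m (S i + S j)).
  { apply dyadic_real_le, Nat.mul_le_mono_r, Nat.le_min_r. }
  rewrite dyadic_real_add, !dyadic_real_S in Hmn. lra.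
Qed.

Lemma dyadic_above_oplus a b n k : (k <= 2 ^ n)%nat -> leqM (a ⊕ b) (dyadic n k) ->
  Rmin 1 (value a + value b) <= dyadic_real n k.
Proof.
  intros Hk Hp. destruct (Nat.eq_dec k (2 ^ n)) as [->|Hne].
  { rewrite dyadic_real_top. apply Rmin_l. }
  apply Rle_trans with (value a + value b); [apply Rmin_r|].
  apply le_approx with 2; [lra|]. intro m.
  destruct (dyadic_approx a m) as [i [Hi [Hpi [Hli Hui]]]].
  destruct (dyadic_approx b m) as [j [Hj [Hpj [Hlj Huj]]]].
  assert (Hp3 : leqM (dyadic m (Nat.min (2 ^ m) (i + j))) (dyadic n k)).
  { apply leqM_trans with (a ⊕ b); auto. rewrite <- dyadic_oplus. apply leqM_oplus; auto. }
  apply dyadic_leqM_nat in Hp3; auto; [|apply Nat.le_min_l].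
  destruct (Nat.le_gt_cases (2 ^ m) (i + j)) as [Hge|Hlt].
  - rewrite Nat.min_l in Hp3 by auto. exfalso.
    rewrite (Nat.mul_comm k) in Hp3. apply Nat.mul_le_mono_pos_l in Hp3; [lia|].
    pose proof (Nat.pow_nonzero 2 m). lia.
  - rewrite Nat.min_r in Hp3 by lia. apply dyadic_real_le in Hp3.
    rewrite dyadic_real_add in Hp3. unfold Rdiv. lra.
Qed.

Lemma value_oplus a b : value (a ⊕ b) = Rmin 1 (value a + value b).
Proof.
  symmetry. apply value_unique; intros n k Hk Hp.
  - apply dyadic_below_oplus; auto.
  - apply dyadic_above_oplus; auto.
Qed.

Lemma value_zero : value 𝟎 = 0.
Proof.
  pose proof (value_bounds 𝟎). apply Rle_antisym; [|lra].
  rewrite <- (dyadic_real_0 0). apply value_le_dyadic; [lia|apply leqM_refl].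
Qed.

Lemma value_half a : value (halve a) = value a / 2.
Proof.
  assert (Hone : value (halve 𝟏) = / 2).
  { pose proof (value_neg (halve 𝟏)) as H. rewrite neg_half_one in H. lra. }
  assert (L : value (halve a) <= / 2) by (rewrite <- Hone; apply value_mono, half_mono, leq1).
  pose proof (value_oplus (halve a) (halve a)) as H. rewrite half_double in H.
  rewrite Rmin_right in H by lra. lra.
Qed.

Lemma value_delta_unfold (x : nat -> A) :
  value (delta A x) = value (x 0%nat) / 2 + value (delta A (fun n => x (S n))) / 2.
Proof.
  rewrite delta_unfold at 1. rewrite value_oplus, !value_half.
  pose proof (value_bounds (x 0%nat)). pose proof (value_bounds (delta A (fun n => x (S n)))).
  apply Rmin_right. lra.
Qed.

Lemma value_delta_partial (x : nat -> A) N :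
  value (delta A x) = sum_f_R0 (fun i => value (x i) / 2 ^ S i) N
                      + value (delta A (fun i => x (S N + i)%nat)) / 2 ^ S N.
Proof.
  revert x. induction N; intro x.
  - simpl. rewrite value_delta_unfold. field.
  - rewrite tech5, IHN, value_delta_unfold.
    replace (x (S N + 0)%nat) with (x (S N)) by (f_equal; lia).
    replace (fun n => x (S N + S n)%nat) with (fun i => x (S (S N) + i)%nat)
      by (apply functional_extensionality; intro i; f_equal; lia).
    simpl pow. field. apply pow_nonzero. lra.
Qed.

Lemma value_delta (x : nat -> A) :
  infinite_sum (fun i => value (x i) / 2 ^ S i) (value (delta A x)).
Proof.
  intros e He. destruct (inv_pow2_small e He) as [N HN]. exists N. intros n Hn.
  unfold Rdist. rewrite (value_delta_partial x n).
  set (t := value (delta A (fun i => x (S n + i)%nat))).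
  replace (_ - _) with (- (t / 2 ^ S n)) by ring.
  pose proof (value_bounds (delta A (fun i => x (S n + i)%nat))) as Ht. fold t in Ht.
  pose proof (inv_pow2_pos (S n)).
  rewrite Rabs_Ropp, Rabs_pos_eq by (unfold Rdiv; nra).
  apply Rle_lt_trans with (/ 2 ^ N); auto.
  apply Rle_trans with (/ 2 ^ S n); [unfold Rdiv; nra|].
  apply Rinv_le_contravar; [apply pow2_pos|]. apply Rle_pow; [lra|lia].
Qed.
End Valuation.

(** * 5. The standard delta-algebra [0,1] *)

(* Coquelicot is imported only inside this module: its own [zero] and [one]
   would otherwise shadow those of delta-algebras. *)
Module StandardAlgebra.
Import Coquelicot.Coquelicot.

Definition weight (n : nat) : R := / 2 ^ S n.

Lemma weight_pos n : 0 < weight n.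
Proof. apply inv_pow2_pos. Qed.

Lemma is_series_weight : is_series weight 1.
Proof.
  assert (Hq : Rabs (/ 2) < 1) by (rewrite Rabs_pos_eq; lra).
  pose proof (is_series_scal_l (/ 2) _ _ (is_series_geom (/ 2) Hq)) as H.
  replace 1 with (scal (/ 2) (/ (1 - / 2))) by (cbn; unfold mult; cbn; field).
  apply is_series_ext with (2 := H). intro n.
  cbn. unfold mult; cbn. unfold weight. rewrite <- pow_inv. reflexivity.
Qed.

Definition unit_bounded (c : nat -> R) : Prop := forall n, 0 <= c n <= 1.

Lemma ex_weighted_series c : unit_bounded c -> ex_series (fun n => c n * weight n).
Proof.
  intro H. apply (@ex_series_le R_AbsRing R_CompleteNormedModule) with weight.
  - intro n. change (norm (c n * weight n)) with (Rabs (c n * weight n)).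
    specialize (H n). pose proof (weight_pos n). rewrite Rabs_pos_eq; nra.
  - exists 1. apply is_series_weight.
Qed.

Definition weighted_sum (c : nat -> R) : R := Series (fun n => c n * weight n).

Lemma weighted_sum_ext c d : (forall n, c n = d n) -> weighted_sum c = weighted_sum d.
Proof. intro H. apply Series_ext. intro n. rewrite H. auto. Qed.
Lemma weighted_sum_scal k c : weighted_sum (fun n => k * c n) = k * weighted_sum c.
Proof. unfold weighted_sum. rewrite <- Series_scal_l. apply Series_ext. intro. ring. Qed.
Lemma weighted_sum_const a : weighted_sum (fun _ => a) = a.
Proof.
  unfold weighted_sum. rewrite Series_scal_l, (is_series_unique _ _ is_series_weight). ring.
Qed.
Lemma weighted_sum_mono c d : unit_bounded d -> (forall n, 0 <= c n <= d n) ->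
  weighted_sum c <= weighted_sum d.
Proof.
  intros Hd H. apply Series_le; [|apply ex_weighted_series; auto].
  intro n. specialize (H n). pose proof (weight_pos n). split; nra.
Qed.
Lemma weighted_sum_bound c : unit_bounded c -> 0 <= weighted_sum c <= 1.
Proof.
  intro H. split.
  - rewrite <- (weighted_sum_const 0). apply weighted_sum_mono; auto.
    intro n; specialize (H n); lra.
  - rewrite <- (weighted_sum_const 1). apply weighted_sum_mono; [intro; lra|].
    intro n; specialize (H n); lra.
Qed.
Lemma weighted_sum_unfold c : unit_bounded c ->
  weighted_sum c = c 0%nat / 2 + weighted_sum (fun n => c (S n)) / 2.
Proof.
  intro H. unfold weighted_sum. rewrite Series_incr_1 by (apply ex_weighted_series; auto).
  rewrite (Series_ext _ (fun n => / 2 * (c (S n) * weight n))).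
  - rewrite Series_scal_l. unfold weight. simpl. field.
  - intro n. unfold weight. simpl. rewrite Rinv_mult. ring.
Qed.

Lemma value_delta_weighted (A : DeltaAlgebra) (M : A -> Prop) (HM : prime_ideal M)
  (x : nat -> A) : value A M HM (delta A x) = weighted_sum (fun n => value A M HM (x n)).
Proof.
  symmetry. apply is_series_unique, is_series_Reals, value_delta.
Qed.

Lemma weighted_sum_close N e c d : unit_bounded c -> unit_bounded d -> 0 <= e ->
  (forall n, (n < N)%nat -> Rabs (c n - d n) <= e) ->
  Rabs (weighted_sum c - weighted_sum d) <= e + / 2 ^ N.
Proof.
  revert c d. induction N; intros c d Hc Hd He H.
  - simpl. pose proof (weighted_sum_bound c Hc). pose proof (weighted_sum_bound d Hd).
    rewrite Rinv_1. unfold Rabs; destruct Rcase_abs; lra.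
  - rewrite (weighted_sum_unfold c Hc), (weighted_sum_unfold d Hd).
    assert (H1 : Rabs (c 0%nat - d 0%nat) <= e) by (apply H; lia).
    assert (H2 : Rabs (weighted_sum (fun n => c (S n)) - weighted_sum (fun n => d (S n)))
                 <= e + / 2 ^ N).
    { apply IHN; auto; [intro n; apply Hc|intro n; apply Hd|intros n Hn; apply H; lia]. }
    match goal with |- Rabs ?t <= _ =>
      replace t with ((c 0%nat - d 0%nat) / 2 + (weighted_sum (fun n => c (S n))
                        - weighted_sum (fun n => d (S n))) / 2) by field end.
    eapply Rle_trans; [apply Rabs_triang|].
    unfold Rdiv. rewrite !Rabs_mult, (Rabs_pos_eq (/ 2)) by lra.
    replace (/ 2 ^ S N) with (/ 2 ^ N * / 2) by (simpl; rewrite Rinv_mult; ring).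
    nra.
Qed.

Definition unit_interval := {x : R | 0 <= x <= 1}.
Definition uval (a : unit_interval) : R := proj1_sig a.
Lemma uval_bound (a : unit_interval) : 0 <= uval a <= 1. Proof. exact (proj2_sig a). Qed.
Lemma uval_inj (a b : unit_interval) : uval a = uval b -> a = b.
Proof.
  destruct a as [a Ha], b as [b Hb]. unfold uval; simpl. intros ->.
  f_equal. apply proof_irrelevance.
Qed.

Lemma std_oplus_proof (a b : unit_interval) : 0 <= Rmin 1 (uval a + uval b) <= 1.
Proof.
  pose proof (uval_bound a); pose proof (uval_bound b).
  unfold Rmin. destruct (Rle_dec 1 (uval a + uval b)); lra.
Qed.
Definition std_oplus (a b : unit_interval) : unit_interval :=
  exist _ (Rmin 1 (uval a + uval b)) (std_oplus_proof a b).
Lemma std_neg_proof (a : unit_interval) : 0 <= 1 - uval a <= 1.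
Proof. pose proof (uval_bound a); lra. Qed.
Definition std_neg (a : unit_interval) : unit_interval := exist _ (1 - uval a) (std_neg_proof a).
Lemma std_zero_proof : 0 <= 0 <= 1. Proof. lra. Qed.
Definition std_zero : unit_interval := exist _ 0 std_zero_proof.
Lemma uval_unit_bounded (x : nat -> unit_interval) : unit_bounded (fun n => uval (x n)).
Proof. intro n. apply uval_bound. Qed.
Definition std_delta (x : nat -> unit_interval) : unit_interval :=
  exist _ (weighted_sum (fun n => uval (x n))) (weighted_sum_bound _ (uval_unit_bounded x)).

Lemma uval_oplus a b : uval (std_oplus a b) = Rmin 1 (uval a + uval b). Proof. reflexivity. Qed.
Lemma uval_neg a : uval (std_neg a) = 1 - uval a. Proof. reflexivity. Qed.
Lemma uval_zero : uval std_zero = 0. Proof. reflexivity. Qed.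
Lemma uval_delta x : uval (std_delta x) = weighted_sum (fun n => uval (x n)).
Proof. reflexivity. Qed.

Lemma uval_delta_unfold (x : nat -> unit_interval) : uval (std_delta x) =
  uval (x 0%nat) / 2 + weighted_sum (fun n => uval (x (S n))) / 2.
Proof. apply weighted_sum_unfold, uval_unit_bounded. Qed.
Lemma uval_half (a : unit_interval) :
  uval (std_delta (fun n => match n with 0%nat => a | _ => std_zero end)) = uval a / 2.
Proof.
  rewrite uval_delta_unfold. simpl.
  rewrite weighted_sum_const. field.
Qed.

(* Case analysis on every [Rmin] in the goal, innermost first. *)
Ltac case_min := unfold Rmin in *; repeat match goal with
  | |- context [Rle_dec ?a ?b] =>
     lazymatch a with context [Rle_dec _ _] => fail | _ =>
     lazymatch b with context [Rle_dec _ _] => fail | _ => destruct (Rle_dec a b) end end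
  end.
Ltac simpl_uval := repeat rewrite ?uval_oplus, ?uval_neg, ?uval_zero.
Ltac to_reals := apply uval_inj; simpl_uval.

Lemma std_oplus_assoc a b c : std_oplus a (std_oplus b c) = std_oplus (std_oplus a b) c.
Proof.
  to_reals. pose proof (uval_bound a); pose proof (uval_bound b); pose proof (uval_bound c).
  case_min; lra.
Qed.
Lemma std_oplus_comm a b : std_oplus a b = std_oplus b a.
Proof. to_reals. rewrite Rplus_comm. auto. Qed.
Lemma std_oplus_zero a : std_oplus a std_zero = a.
Proof. to_reals. pose proof (uval_bound a). case_min; lra. Qed.
Lemma std_neg_neg a : std_neg (std_neg a) = a.
Proof. to_reals. ring. Qed.
Lemma std_oplus_one a : std_oplus a (std_neg std_zero) = std_neg std_zero.
Proof. to_reals. pose proof (uval_bound a). case_min; lra. Qed.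
Lemma std_lukasiewicz a b :
  std_oplus (std_neg (std_oplus (std_neg a) b)) b = std_oplus (std_neg (std_oplus (std_neg b) a)) a.
Proof.
  to_reals.
  pose proof (uval_bound a); pose proof (uval_bound b). case_min; lra.
Qed.

Lemma std_delta_i : forall x : nat -> unit_interval,
    let ominus a b := std_neg (std_oplus (std_neg a) (std_neg (std_neg b))) in
    let d a b := std_oplus (ominus a b) (ominus b a) in
    d (std_delta x) (std_delta (fun n => match n with 0 => x 0%nat | _ => std_zero end))
    = std_delta (fun n => match n with 0 => std_zero | _ => x n end).
Proof.
  intros x om d. unfold d, om. to_reals.
  rewrite (uval_half (x 0%nat)), !uval_delta_unfold. simpl.
  pose proof (uval_bound (x 0%nat)).
  pose proof (weighted_sum_bound _ (uval_unit_bounded (fun n => x (S n)))).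
  case_min; lra.
Qed.

Lemma std_delta_ii : forall x : nat -> unit_interval,
    let half a := std_delta (fun n => match n with 0 => a | _ => std_zero end) in
    half (std_delta x) = std_delta (fun n => half (x n)).
Proof.
  intros x hf. unfold hf. apply uval_inj. rewrite uval_half, uval_delta, uval_delta.
  symmetry. rewrite (weighted_sum_ext _ (fun n => / 2 * uval (x n))).
  - rewrite weighted_sum_scal. field.
  - intro n. rewrite uval_half. field.
Qed.

Lemma std_delta_iii : forall a, std_delta (fun _ => a) = a.
Proof. intro a. apply uval_inj. rewrite uval_delta. apply weighted_sum_const. Qed.

Lemma std_delta_iv : forall x : nat -> unit_interval,
    let half a := std_delta (fun n => match n with 0 => a | _ => std_zero end) in
    std_delta (fun n => match n with 0 => std_zero | S m => x m end) = half (std_delta x).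
Proof.
  intros x hf. unfold hf. apply uval_inj. rewrite uval_half, uval_delta_unfold. simpl.
  lra.
Qed.

Lemma std_delta_v : forall x y : nat -> unit_interval,
    let join a b := std_oplus (std_neg (std_oplus (std_neg a) b)) b in
    join (std_delta x) (std_delta (fun n => std_oplus (x n) (y n)))
    = std_delta (fun n => std_oplus (x n) (y n)).
Proof.
  intros x y jn. unfold jn. to_reals. rewrite !uval_delta.
  assert (weighted_sum (fun n => uval (x n)) <= weighted_sum (fun n => uval (std_oplus (x n) (y n)))).
  { apply weighted_sum_mono; [apply uval_unit_bounded|]. intro n. rewrite uval_oplus.
    pose proof (uval_bound (x n)); pose proof (uval_bound (y n)). case_min; lra. }
  pose proof (weighted_sum_bound _ (uval_unit_bounded x)).
  pose proof (weighted_sum_bound _ (uval_unit_bounded (fun n => std_oplus (x n) (y n)))).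
  case_min; lra.
Qed.

Lemma std_delta_vi : forall a b,
    let ominus a b := std_neg (std_oplus (std_neg a) (std_neg (std_neg b))) in
    let half a := std_delta (fun n => match n with 0 => a | _ => std_zero end) in
    half (ominus a b) = ominus (half a) (half b).
Proof.
  intros a b om hf. unfold om, hf. to_reals. rewrite !uval_half. simpl_uval.
  pose proof (uval_bound a); pose proof (uval_bound b). case_min; lra.
Qed.

Definition standard_algebra : DeltaAlgebra :=
  @Build_DeltaAlgebra unit_interval std_oplus std_neg std_zero std_delta
    std_oplus_assoc std_oplus_comm std_oplus_zero std_neg_neg std_oplus_one std_lukasiewicz
    std_delta_i std_delta_ii std_delta_iii std_delta_iv std_delta_v std_delta_vi.

Lemma standard_algebra_nontrivial : exists a b : standard_algebra, a <> b.
Proof.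
  exists std_zero, (std_neg std_zero). intro H. apply (f_equal uval) in H.
  rewrite uval_neg, uval_zero in H. lra.
Qed.
End StandardAlgebra.

(** * 6. Reduction to the standard algebra *)

Import StandardAlgebra.

Definition std_value (A : DeltaAlgebra) (M : A -> Prop) (HM : prime_ideal M) (a : A)
  : standard_algebra := exist _ (value A M HM a) (value_bounds A M HM a).

Lemma std_value_eval (A : DeltaAlgebra) (M : A -> Prop) (HM : prime_ideal M)
  (V : Type) (f : V -> A) (t : term V) :
  std_value A M HM (eval f t) = eval (fun v => std_value A M HM (f v)) t.
Proof.
  induction t as [v | s IH | s IHs u IHu | s IHs |]; apply uval_inj; simpl.
  - reflexivity.
  - rewrite value_delta_weighted. apply weighted_sum_ext. intro n. rewrite <- IH. reflexivity.
  - rewrite <- IHs, <- IHu. apply value_oplus.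
  - rewrite <- IHs. apply value_neg.
  - apply value_zero.
Qed.

Lemma satisfiable_in_standard (V : Type) (Sigma : equation V -> Prop) :
  satisfiable Sigma -> exists g : V -> standard_algebra, models standard_algebra g Sigma.
Proof.
  intros [A [Hnt [f Hf]]]. destruct (exists_prime_ideal Hnt) as [M HM].
  exists (fun v => std_value A M HM (f v)). intros e He.
  rewrite <- !std_value_eval. f_equal. apply Hf; auto.
Qed.

(** * 7. Term values depend uniformly continuously on finitely many variables *)

Section TermContinuity.
Context {V : Type}.

(* Points of R^V are turned into assignments in [0,1] by clamping. *)
Definition clamp (x : R) : R := Rmax 0 (Rmin 1 x).
Lemma clamp_bound x : 0 <= clamp x <= 1.
Proof. unfold clamp, Rmax, Rmin. repeat destruct Rle_dec; lra. Qed.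
Lemma clamp_id x : 0 <= x <= 1 -> clamp x = x.
Proof. unfold clamp, Rmax, Rmin. repeat destruct Rle_dec; lra. Qed.
Lemma clamp_lipschitz a b : Rabs (clamp a - clamp b) <= Rabs (a - b).
Proof.
  unfold clamp, Rmax, Rmin. repeat destruct Rle_dec; unfold Rabs; repeat destruct Rcase_abs; lra.
Qed.
Lemma min1_lipschitz x y : Rabs (Rmin 1 x - Rmin 1 y) <= Rabs (x - y).
Proof.
  unfold Rmin. repeat destruct Rle_dec; unfold Rabs; repeat destruct Rcase_abs; lra.
Qed.

Definition clamped (g : V -> R) : V -> standard_algebra :=
  fun v => exist _ (clamp (g v)) (clamp_bound (g v)).

Definition term_value (t : term V) (g : V -> R) : R := uval (eval (clamped g) t).

Definition finitely_uc (F : (V -> R) -> R) : Prop :=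
  forall eps, 0 < eps -> exists (S : list V) (eta : R), 0 < eta /\
    forall g g', (forall v, In v S -> Rabs (g v - g' v) < eta) -> Rabs (F g - F g') < eps.

Lemma finitely_uc_coordinate v : finitely_uc (fun g => clamp (g v)).
Proof.
  intros eps Heps. exists (v :: nil), eps. split; auto. intros g g' H.
  eapply Rle_lt_trans; [apply clamp_lipschitz | apply H; simpl; auto].
Qed.

Lemma finitely_uc_const c : finitely_uc (fun _ => c).
Proof.
  intros eps Heps. exists nil, 1. split; [lra|]. intros. unfold Rminus.
  rewrite Rplus_opp_r, Rabs_R0. auto.
Qed.

Lemma finitely_uc_neg F : finitely_uc F -> finitely_uc (fun g => 1 - F g).
Proof.
  intros HF eps Heps. destruct (HF eps Heps) as [S [eta [Heta H]]].
  exists S, eta. split; auto. intros g g' Hg.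
  replace (1 - F g - (1 - F g')) with (- (F g - F g')) by ring.
  rewrite Rabs_Ropp. auto.
Qed.

Lemma finitely_uc_family (F : nat -> (V -> R) -> R) : (forall n, finitely_uc (F n)) ->
  forall N eps, 0 < eps -> exists (S : list V) (eta : R), 0 < eta /\
    forall g g', (forall v, In v S -> Rabs (g v - g' v) < eta) ->
    forall n, (n < N)%nat -> Rabs (F n g - F n g') < eps.
Proof.
  intros HF N eps Heps. induction N as [|N IH].
  - exists nil, 1. split; [lra|]. intros g g' _ n Hn. lia.
  - destruct IH as [S1 [e1 [He1 H1]]]. destruct (HF N eps Heps) as [S2 [e2 [He2 H2]]].
    exists (S1 ++ S2), (Rmin e1 e2). split; [apply Rmin_glb_lt; auto|].
    intros g g' H n Hn. destruct (Nat.eq_dec n N) as [->|Hne].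
    + apply H2. intros v Hv. eapply Rlt_le_trans; [apply H, in_or_app; auto|apply Rmin_r].
    + apply H1; [|lia]. intros v Hv.
      eapply Rlt_le_trans; [apply H, in_or_app; auto|apply Rmin_l].
Qed.

Lemma finitely_uc_oplus F G : finitely_uc F -> finitely_uc G ->
  finitely_uc (fun g => Rmin 1 (F g + G g)).
Proof.
  intros HF HG eps Heps.
  destruct (finitely_uc_family (fun n => match n with 0%nat => F | _ => G end)
              ltac:(intros [|n]; auto) 2 (eps / 2) ltac:(lra)) as [S [eta [Heta H]]].
  exists S, eta. split; auto. intros g g' Hg.
  pose proof (H g g' Hg 0%nat ltac:(lia)) as H0. pose proof (H g g' Hg 1%nat ltac:(lia)) as H1.
  cbv beta iota in H0, H1.
  eapply Rle_lt_trans; [apply min1_lipschitz|].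
  replace (F g + G g - (F g' + G g')) with ((F g - F g') + (G g - G g')) by ring.
  eapply Rle_lt_trans; [apply Rabs_triang|]. lra.
Qed.

(* The weighted sum is controlled by its first N terms up to 1/2^N. *)
Lemma finitely_uc_weighted_sum (F : nat -> (V -> R) -> R) :
  (forall g, unit_bounded (fun n => F n g)) -> (forall n, finitely_uc (F n)) ->
  finitely_uc (fun g => weighted_sum (fun n => F n g)).
Proof.
  intros Hb HF eps Heps. destruct (inv_pow2_small (eps / 2)) as [N HN]; [lra|].
  destruct (finitely_uc_family F HF N (eps / 2) ltac:(lra)) as [S [eta [Heta H]]].
  exists S, eta. split; auto. intros g g' Hg.
  eapply Rle_lt_trans; [apply (weighted_sum_close N (eps / 2)); auto; [lra|]|lra].
  intros n Hn. left. apply H; auto.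
Qed.

Lemma term_value_finitely_uc (t : term V) : finitely_uc (term_value t).
Proof.
  induction t as [v | s IH | s IHs u IHu | s IHs |].
  - apply finitely_uc_coordinate.
  - apply (finitely_uc_weighted_sum (fun n => term_value (s n))); auto.
    intros g n. apply uval_bound.
  - apply (finitely_uc_oplus _ _ IHs IHu).
  - apply (finitely_uc_neg _ IHs).
  - exact (finitely_uc_const 0).
Qed.
End TermContinuity.

(** * 8. Compactness of [0,1]^V *)

Module Compactness.
Import all_boot all_order all_algebra classical_sets boolp topology normedtype Rstruct Rstruct_topology.
Import ArrowAsProduct.
Local Open Scope classical_set_scope.
Local Open Scope R_scope.

Lemma cube_compact (I : eqType) :
  compact [set f : I -> R | forall i, `[0%R, 1%R]%classic (f i)].
Proof.
  apply: (@tychonoff I (fun _ => R) (fun _ => `[0%R, 1%R]%classic)) => i.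
  exact: segment_compact.
Qed.

Lemma in_unit_itv (x : R) : `[0%R, 1%R]%classic x <-> 0 <= x <= 1.
Proof.
  rewrite /= in_itv /=. split; first by move/andP=> [/RleP H1 /RleP H2].
  by move=> [H1 H2]; apply/andP; split; apply/RleP.
Qed.

Lemma nbhs_coordinates (I : eqType) (L : list I) (eta : R) (p : I -> R) : 0 < eta ->
  nbhs p [set f : I -> R | forall v, In v L -> Rabs (f v - p v) < eta].
Proof.
  move=> He. elim: L => [|v L IH].
  - have HT : nbhs p (@setT (I -> R)) by exact: filterT.
    apply: filterS HT. by move=> f _ v [].
  - have Hv : nbhs p [set f : I -> R | Rabs (f v - p v) < eta].
    { have Hb : nbhs (p v) (ball (p v) eta) by apply/nbhs_ballP; exists eta => //=; apply/RltP.
      have Hp : nbhs p ((fun f : I -> R => f v) @^-1` ball (p v) eta)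
        by exact: (@proj_continuous I (fun _ => R) v p _ Hb).
      apply: filterS Hp => f /=. rewrite /ball /= => /RltP H.
      by rewrite -Rabs_Ropp Ropp_minus_distr. }
    apply: filterS (filterI Hv IH) => f [Hf1 Hf2] w [<-|Hw]; [exact: Hf1 | exact: Hf2].
Qed.

Section Compactness.
Variable V : Type.
Let I := {classic V}.

(* The solution set of an equation is closed: a point all of whose
   neighbourhoods contain solutions is itself a solution. *)
Lemma solution_of_adherent (e : equation V) (p : I -> R) :
  (forall B, nbhs p B -> exists f, B f /\ Defs.eval (clamped f) e.1 = Defs.eval (clamped f) e.2) ->
  Defs.eval (clamped p) e.1 = Defs.eval (clamped p) e.2.
Proof.
  move=> adh. apply: NNPP => Hne.
  set a := term_value (V:=I) e.1 p; set b := term_value (V:=I) e.2 p.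
  have Hd : 0 < Rabs (a - b).
  { apply: Rabs_pos_lt => H. apply: Hne. apply: uval_inj. rewrite /a /b /term_value in H. lra. }
  have [S1 [e1 [He1 H1]]] := term_value_finitely_uc (V:=I) e.1 (Rabs (a - b) / 3) ltac:(lra).
  have [S2 [e2 [He2 H2]]] := term_value_finitely_uc (V:=I) e.2 (Rabs (a - b) / 3) ltac:(lra).
  have [f [Nf Hf]] := adh _ (nbhs_coordinates _ (S1 ++ S2) _ p (Rmin_glb_lt _ _ _ He1 He2)).
  have A1 : Rabs (term_value (fst e) f - a) < Rabs (a - b) / 3.
  { apply: H1 => v Hv. apply: Rlt_le_trans (Rmin_l _ _). apply: Nf. apply: in_or_app. by left. }
  have A2 : Rabs (term_value (snd e) f - b) < Rabs (a - b) / 3.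
  { apply: H2 => v Hv. apply: Rlt_le_trans (Rmin_r _ _). apply: Nf. apply: in_or_app. by right. }
  rewrite /term_value Hf -/(term_value (snd e) f) in A1.
  move: Hd A1 A2. clearbody a b. move: (term_value (snd e) f) => x.
  rewrite /Rabs. repeat case: Rcase_abs => ?; move=> *; lra.
Qed.

(* The finite subsets generate a proper filter on the
   compact cube; any cluster point solves every equation of Sigma. *)
Theorem standard_compactness (Sigma : equation V -> Prop) :
  (forall l : list (equation V), (forall e, In e l -> Sigma e) ->
     exists g : V -> standard_algebra, models standard_algebra g (fun e => In e l)) ->
  exists g : V -> standard_algebra, models standard_algebra g Sigma.
Proof.
  move=> Hfin.
  pose cube := [set f : I -> R | forall i, `[0%R, 1%R]%classic (f i)].
  pose C l := [set f : I -> R | cube f /\ models standard_algebra (clamped f) (fun e => In e l)].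
  pose D := [set l : list (equation V) | forall e, In e l -> Sigma e].
  have FF : Filter (filter_from D C).
  { apply: filter_from_filter; first by exists nil => e [].
    move=> i j Di Dj. exists (i ++ j).
    - move=> e He. case: (in_app_or _ _ _ He) => H; [exact: Di | exact: Dj].
    - move=> f [Kf Hf]. split; split => // e He; apply: Hf; apply: in_or_app; by [left|right]. }
  have PF : ProperFilter (filter_from D C).
  { apply: filter_from_proper => l Dl. have [g0 Hg0] := Hfin l Dl.
    exists (fun v => uval (g0 v)). split; first by move=> i; apply/in_unit_itv; apply: uval_bound.
    have -> : clamped (fun v => uval (g0 v)) = g0.
    { apply: functional_extensionality => v. apply: uval_inj. apply: clamp_id. apply: uval_bound. }
    exact: Hg0. }
  have [p [_ clp]] := @cube_compact I (filter_from D C) PF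
                        ltac:(exists nil; [by move=> e [] | by move=> f []]).
  exists (clamped p) => e He. apply: solution_of_adherent => B NB.
  have FC : filter_from D C (C (e :: nil)) by exists (e :: nil) => // e' [<-|[]].
  have [f [[_ Hf] Bf]] := clp _ _ FC NB.
  exists f. split => //. exact: (Hf e (or_introl erefl)).
Qed.
End Compactness.
End Compactness.

Theorem mainTheorem1 (V : Type) (Sigma : equation V -> Prop) :
  satisfiable Sigma <->
  (forall l : list (equation V),
     (forall e, In e l -> Sigma e) -> satisfiable (fun e => In e l)).
Proof.
  split.
  -
    intros [A [Hnt [f Hf]]] l Hl. exists A. split; auto. exists f. intros e He. auto.
  - (* move every finite model to [0,1], then glue them by compactness *)
    intro Hfin.
    destruct (Compactness.standard_compactness V Sigma
                (fun l Hl => satisfiable_in_standard V _ (Hfin l Hl))) as [g Hg].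
    exists standard_algebra. split; [apply standard_algebra_nontrivial | exists g; exact Hg].
Qed.
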